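(* Let $d\ge 2$ and let $n_k$ denote the number of vertices of $L^k(SF(d,4))$, where $SF(d,4)$ is the square-free digraph; equivalently, $n_k$ is the number of words of length $k+4$ over the alphabet $\{0,1,\dots,d\}$ having no two equal consecutive letters and no factor of the form $abab$ (with letters $a\neq b$). Then $n_0=d^4+d^3-d^2-d$, $n_1=d^5+d^4-2d^3-d^2+d$, and $$n_k=(d-1)\,n_{k-1}+(d-1)\,n_{k-2}\qquad\text{for all } k\ge 2.$$
   Context: The square-free digraph $SF(d,4)$ has as vertices the words $a_1a_2a_3a_4$ over $\{0,1,\dots,d\}$ with $a_i\ne a_{i+1}$ for $i=1,2,3$ and not of the form $abab$ (i.e., not $a_1=a_3$ and $a_2=a_4$); there is an arc from $a_1a_2a_3a_4$ to $a_2a_3a_4a_5$ whenever $a_5\ne a_4$ and, if $a_2=a_4$, then $a_5\ne a_3$. The line digraph $LG$ has as vertex set the set of arcs of $G$, with an arc from $e$ to $f$ whenever the head of $e$ equals the tail of $f$; $L^0G=G$, $L^kG=L(L^{k-1}G)$. *)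

From mathcomp Require Import all_boot all_order all_algebra.
Set Implicit Arguments. Unset Strict Implicit. Unset Printing Implicit Defensive.

Record digraph := Digraph { dvert : finType; darc : rel dvert }.

Definition line_vert (G : digraph) : finType :=
  {p : dvert G * dvert G | darc p.1 p.2}.
Definition line_arc (G : digraph) : rel (line_vert G) :=
  fun e f => (val e).2 == (val f).1.
Definition line_digraph (G : digraph) : digraph :=
  @Digraph (line_vert G) (@line_arc G).

Definition iter_line (k : nat) (G : digraph) : digraph := iter k line_digraph G.

Definition sf_word (d : nat) (s : seq 'I_d.+1) : bool :=
  let x i := nth ord0 s i in
  all (fun i => x i != x i.+1) (iota 0 (size s).-1) &&
  all (fun i => ~~ ((x i == x i.+2) && (x i.+1 == x i.+3))) (iota 0 (size s - 3)).

Definition SF_vert (d : nat) : finType := {w : 4.-tuple 'I_d.+1 | sf_word w}.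

(* Arcs of SF(d,4): a1a2a3a4 -> a2a3a4a5 when a5 != a4 and (a2 = a4 -> a5 != a3). *)
Definition SF_arc (d : nat) : rel (SF_vert d) :=
  fun u v =>
    let a i := tnth (val u) i in
    let b i := tnth (val v) i in
    [&& b ord0 == a (inord 1), b (inord 1) == a (inord 2), b (inord 2) == a (inord 3),
        b (inord 3) != a (inord 3)
      & (a (inord 1) == a (inord 3)) ==> (b (inord 3) != a (inord 2))].

Definition SF (d : nat) : digraph := @Digraph (SF_vert d) (@SF_arc d).

Definition nk (d k : nat) : nat := #|dvert (iter_line k (SF d))|.

Definition nwords (d m : nat) : nat := #|[set t : m.-tuple 'I_d.+1 | sf_word t]|.

From mathcomp Require Import all_boot all_order all_algebra.
From mathcomp Require Import zify ring.
Set Implicit Arguments. Unset Strict Implicit. Unset Printing Implicit Defensive.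

(* Vertices of L^k G are the walks of length k in G, and the walks of length k
   of SF(d,4) from a vertex v are exactly the square-free words extending v by k
   letters, so n_k counts square-free words of length k + 4.  For the recurrence,
   let T_m count square-free words of length m, split as A_m (words aba...) plus
   B_m (the others), and prepend a letter x to a square-free word bc...: x must
   avoid b, and avoid c when the word starts with bcb.  Hence A_(m+1) = B_m
   (x = c is forced) and B_(m+1) = (d - 1) T_m (x is any letter but b and c), so
   T_(m+2) = B_(m+1) + (d - 1) T_(m+1) = (d - 1) (T_(m+1) + T_m). *)

Section TupleBig.
Variables (R : Type) (idx : R) (op : Monoid.com_law idx) (T : finType).

Lemma big_tuple0 (F : seq T -> R) : \big[op/idx]_(t : 0.-tuple T) F t = F [::].
Proof. by rewrite (big_pred1 [tuple]) // => t; apply/esym/eqP; exact: tuple0. Qed.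

Lemma big_tupleS n (F : seq T -> R) :
  \big[op/idx]_(t : n.+1.-tuple T) F t =
  \big[op/idx]_(x : T) \big[op/idx]_(t : n.-tuple T) F (x :: t).
Proof.
rewrite pair_big (reindex (fun p : T * n.-tuple T => [tuple of p.1 :: p.2])) //=.
exists (fun t : n.+1.-tuple T => (thead t, [tuple of behead t])).
  by move=> [x t] _; congr pair; apply: val_inj.
by move=> [[|x s] //= sz] _; apply: val_inj.
Qed.

Lemma big_tuple_cat n m (F : seq T -> R) :
  \big[op/idx]_(t : (n + m).-tuple T) F t =
  \big[op/idx]_(s : n.-tuple T) \big[op/idx]_(t : m.-tuple T) F (s ++ t).
Proof.
pose G (s : seq T) := \big[op/idx]_(t : m.-tuple T) F (s ++ t).
elim: n F @G => [|n IHn] F G; first by rewrite (big_tuple0 G).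
rewrite addSn big_tupleS (big_tupleS n G).
by apply: eq_bigr => x _; apply: (IHn (fun t => F (x :: t))).
Qed.

Lemma big_tuple_prefix n m (s : n.-tuple T) (F : seq T -> R) :
  \big[op/idx]_(w : (n + m).-tuple T | take n w == s :> seq T) F w =
  \big[op/idx]_(t : m.-tuple T) F (s ++ t).
Proof.
have take_s (u : n.-tuple T) (t : seq T) : take n (u ++ t) = u.
  by rewrite take_size_cat ?size_tuple.
rewrite big_mkcond.
rewrite (big_tuple_cat n m (fun w => if take n w == s :> seq T then F w else idx)).
rewrite (big_only1 s) //= => [|u us _].
  by apply: eq_bigr => t _; rewrite take_s eqxx.
by apply: big1 => t _; rewrite take_s val_eqE (negbTE us).
Qed.

End TupleBig.

Fixpoint walks (G : digraph) (k : nat) (v : dvert G) : nat :=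
  if k is k'.+1 then \sum_(w | darc v w) walks k' w else 1.

Lemma sum_arcs (G : digraph) (P : pred (dvert G)) (F : dvert G -> nat) :
  \sum_(e : line_vert G | P (val e).1) F (val e).2 =
  \sum_(u | P u) \sum_(w | darc u w) F w.
Proof.
rewrite pair_big_dep (eq_bigl (fun p => (p \in [pred p | darc p.1 p.2]) && P p.1)).
  exact/esym/big_sub_cond.
by move=> p; rewrite andbC.
Qed.

Lemma walks_line (G : digraph) k (e : dvert (line_digraph G)) :
  walks k e = walks k (val e).2.
Proof.
elim: k e => [|k IHk] e //=.
under eq_bigr => f _ do rewrite IHk.
rewrite (eq_bigl (fun f : line_vert G => (val f).1 == (val e).2)) => [|f].
  by rewrite (sum_arcs (pred1 (val e).2) (walks k)) big_pred1_eq.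
by rewrite eq_sym.
Qed.

Lemma card_iter_line k (G : digraph) :
  #|dvert (iter_line k G)| = \sum_(v : dvert G) walks k v.
Proof.
elim: k G => [|k IHk] G; first by rewrite sum1_card.
rewrite /iter_line iterSr -/(iter_line k _) IHk.
under eq_bigr => e _ do rewrite walks_line.
rewrite (eq_bigl (fun e : line_vert G => predT (val e).1)) //.
by rewrite (sum_arcs predT (walks k)).
Qed.

Section SquareFree.
Variable d : nat.
Implicit Types (a b c e : 'I_d.+1) (s t : seq 'I_d.+1).

Definition sf_head a s : bool :=
  if s is b :: s' then
    (a != b) && (if s' is c :: e :: _ then ~~ ((a == c) && (b == e)) else true)
  else true.

Lemma sf_cons a s : sf_word (a :: s) = sf_head a s && sf_word s.
Proof.
case: s => [|b [|c [|e s]]]; rewrite /sf_word /= ?andbT //.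
rewrite !subSS subn0 (iotaDl 1 2) (iotaDl 1 0) !all_map.
by case: (a != b); case: (b != c); case: (c != e); case: (~~ _); rewrite ?andbF.
Qed.

Lemma sf_head_catl a s t : sf_head a (s ++ t) -> sf_head a s.
Proof. by case: s => [|b [|c [|e s]]] //= /andP[->]. Qed.

Lemma sf_head_cat a s t : 3 <= size s -> sf_head a (s ++ t) = sf_head a s.
Proof. by case: s => [|b [|c [|e s]]]. Qed.

Lemma sf_word_catl s t : sf_word (s ++ t) -> sf_word s.
Proof.
by elim: s => [|a s IHs] //=; rewrite !sf_cons => /andP[/sf_head_catl -> /IHs].
Qed.

Definition sf_ext k s : nat := \sum_(t : k.-tuple 'I_d.+1) sf_word (s ++ t).

Lemma sf_ext0 s : sf_ext 0 s = sf_word s.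
Proof.
by rewrite /sf_ext (big_tuple0 _ (fun t => nat_of_bool (sf_word (s ++ t)))) cats0.
Qed.

Lemma sf_extS k s : sf_ext k.+1 s = \sum_a sf_ext k (rcons s a).
Proof.
rewrite /sf_ext (big_tupleS _ _ (fun t => nat_of_bool (sf_word (s ++ t)))).
by apply: eq_bigr => a _; apply: eq_bigr => t _; rewrite cat_rcons.
Qed.

Lemma sf_ext_nsf k s : ~~ sf_word s -> sf_ext k s = 0.
Proof.
move=> s_nsf; apply: big1 => t _.
by rewrite (negbTE (contra (@sf_word_catl s t) s_nsf)).
Qed.

Lemma sf_ext_cons k a s :
  3 <= size s -> sf_head a s -> sf_ext k (a :: s) = sf_ext k s.
Proof.
by move=> s_ge3 a_s; apply: eq_bigr => t _; rewrite /= sf_cons sf_head_cat ?a_s.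
Qed.

Definition starts_aba s : bool := nth ord0 s 0 == nth ord0 s 2.

Definition sf_count m (P : pred (seq 'I_d.+1)) : nat :=
  \sum_(t : m.-tuple 'I_d.+1) (sf_word t && P t).

Lemma nwordsE m : nwords d m = sf_count m predT.
Proof.
rewrite /nwords -sum1_card big_mkcond; apply: eq_bigr => t _.
by rewrite inE andbT; case: sf_word.
Qed.

Lemma sum_neq b : \sum_a (a != b) = d.
Proof.
transitivity (\sum_(a | a != b) 1).
  by rewrite [RHS]big_mkcond; apply: eq_bigr => a _; case: (a != b).
by rewrite sum1_card cardC1 card_ord.
Qed.

Lemma sum_neq2 b c : b != c -> \sum_a ((a != b) && (a != c)) = d.-1.
Proof.
move=> bc; transitivity (\sum_(a in ~: [set b; c]) 1).
  rewrite [RHS]big_mkcond; apply: eq_bigr => a _.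
  by rewrite !inE negb_or; case: (_ && _).
have := cardsC [set b; c]; rewrite sum1_card cards2 bc card_ord.
by move: #|_| => n; lia.
Qed.

Lemma sum_sf_head_short b s : size s <= 1 -> \sum_a sf_head a (b :: s) = d.
Proof.
move=> s_le1; rewrite -[RHS](sum_neq b); apply: eq_bigr => a _.
by case: s s_le1 => [|c [|]] //= _; rewrite andbT.
Qed.

Lemma sum_sf_head_aba b c e s :
  b != c -> \sum_a (sf_head a [:: b, c, e & s] && (a == c)) = (b != e).
Proof.
move=> bc; rewrite (big_only1 c) //= => [|a /negbTE ac _]; last by rewrite ac andbF.
by rewrite eqxx andbT eq_sym bc.
Qed.

Lemma sum_sf_head_nonaba b c s :
  b != c -> \sum_a (sf_head a [:: b, c & s] && (a != c)) = d.-1.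
Proof.
move=> bc; rewrite -(sum_neq2 bc); apply: eq_bigr => a _.
by case: s => [|e s] /=; case: (a == c); rewrite ?andbT ?andbF.
Qed.

Lemma sf_count_cons m P : sf_count m.+1 P =
  \sum_(t : m.-tuple 'I_d.+1) sf_word t * \sum_a (sf_head a t && P (a :: t)).
Proof.
rewrite /sf_count (big_tupleS _ _ (fun t => nat_of_bool (sf_word t && P t))).
rewrite exchange_big; apply: eq_bigr => t _; rewrite big_distrr.
apply: eq_bigr => a _; rewrite sf_cons.
by case: (sf_word t); rewrite /= ?andbT ?andbF ?mul1n.
Qed.

Lemma sf_count_predC m Q : sf_count m predT = sf_count m Q + sf_count m (predC Q).
Proof.
by rewrite /sf_count -big_split; apply: eq_bigr => t _ /=; case: sf_word; case: Q.
Qed.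

Lemma sf_count_short m : 0 < m <= 2 -> sf_count m.+1 predT = d * sf_count m predT.
Proof.
move=> m12; rewrite sf_count_cons /sf_count big_distrr.
apply: eq_bigr => -[t /= /eqP sz_t] _.
move: m12; rewrite -sz_t; case: t {sz_t} => [|b s] //= s_le1.
under eq_bigr => a _ do rewrite andbT.
by rewrite sum_sf_head_short // mulnC andbT.
Qed.

Lemma sf_count1 : sf_count 1 predT = d.+1.
Proof.
rewrite sf_count_cons.
rewrite (big_tuple0 _ (fun t => sf_word t * \sum_a (sf_head a t && predT (a :: t)))).
by rewrite mul1n (eq_bigr (fun _ => 1)) // sum_nat_const card_ord muln1.
Qed.

Lemma sf_count_aba m :
  3 <= m -> sf_count m.+1 starts_aba = sf_count m (predC starts_aba).
Proof.
move=> m3; rewrite sf_count_cons /sf_count; apply: eq_bigr => -[t /= /eqP sz_t] _.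
move: m3; rewrite -sz_t; case: t {sz_t} => [|b [|c [|e s]]] //= _.
rewrite /starts_aba /=; have [<-|bc] := eqVneq b c; first by rewrite sf_cons /= eqxx.
by rewrite sum_sf_head_aba // mulnb.
Qed.

Lemma sf_count_nonaba m :
  2 <= m -> sf_count m.+1 (predC starts_aba) = d.-1 * sf_count m predT.
Proof.
move=> m2; rewrite sf_count_cons /sf_count big_distrr.
apply: eq_bigr => -[t /= /eqP sz_t] _.
move: m2; rewrite -sz_t; case: t {sz_t} => [|b [|c s]] //= _.
rewrite /starts_aba /= andbT mulnC; have [<-|bc] := eqVneq b c.
  by rewrite sf_cons /= eqxx /= !muln0.
by rewrite sum_sf_head_nonaba.
Qed.

Lemma nwords_rec m :
  2 <= m -> nwords d m.+2 = d.-1 * nwords d m.+1 + d.-1 * nwords d m.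
Proof.
move=> m2; rewrite !nwordsE (sf_count_predC _ starts_aba).
by rewrite sf_count_aba // !sf_count_nonaba ?(leqW m2) // addnC.
Qed.

Lemma nwords2 : nwords d 2 = d * d.+1.
Proof. by rewrite nwordsE sf_count_short // sf_count1. Qed.

Lemma nwords3 : nwords d 3 = d * (d * d.+1).
Proof. by rewrite -nwords2 !nwordsE sf_count_short. Qed.

End SquareFree.

Lemma SF_arcE d (v w : SF_vert d) :
  SF_arc v w = (take 3 (val w) == behead (val v)).
Proof.
case: v => [[[|a0 [|a1 [|a2 [|a3 [|]]]]] //= sz_v] sf_v].
case: w => [[[|b0 [|b1 [|b2 [|b3 [|]]]]] //= sz_w] sf_w].
rewrite /SF_arc /= !(tnth_nth ord0) /= !inordK //= !eqseq_cons andbT.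
move: sf_w; rewrite !sf_cons /= !andbT.
case: (b0 =P a1) => [->|] //=; case: (b1 =P a2) => [->|] //=.
case: (b2 =P a3) => [->|] //=; rewrite ![b3 == _]eq_sym.
by case: (a1 == a3); case: (a2 == b3); case: (a3 != b3); rewrite ?andbF.
Qed.

Lemma sum_SF_vert d k (P : pred (4.-tuple 'I_d.+1)) :
  \sum_(v : SF_vert d | P (val v)) sf_ext k (val v) = \sum_(s | P s) sf_ext k s.
Proof.
rewrite [RHS](bigID (fun s : 4.-tuple _ => sf_word s)) /=.
rewrite [X in _ + X]big1 ?addn0 => [|s /andP[_ /sf_ext_nsf //]].
rewrite (eq_bigl (fun s => (s \in [pred s : 4.-tuple _ | sf_word s]) && P s)) => [|s].
  exact/esym/big_sub_cond.
by rewrite andbC.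
Qed.

Lemma walks_SF d k (v : SF_vert d) : @walks (SF d) k v = sf_ext k (val v).
Proof.
elim: k v => [|k IHk] v; first by rewrite sf_ext0 (valP v).
rewrite /= sf_extS.
under eq_bigr => w _ do rewrite IHk.
rewrite (eq_bigl _ _ (SF_arcE v)).
transitivity (\sum_(s : 4.-tuple 'I_d.+1 | take 3 s == behead (val v)) sf_ext k s).
  exact: (sum_SF_vert k (fun s => take 3 s == behead (val v))).
rewrite (big_tuple_prefix _ 1 [tuple of behead (val v)] (sf_ext k)) /=.
rewrite (big_tupleS _ 0 (fun t => sf_ext k (behead (val v) ++ t))).
apply: eq_bigr => x _.
rewrite (big_tuple0 _ (fun t => sf_ext k (behead (val v) ++ x :: t))) cats1.
case: v => [[[|a s] //= /eqP[sz_s]] sf_as].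
move: sf_as; rewrite sf_cons => /andP[a_s _].
by rewrite sf_ext_cons ?size_rcons ?sz_s // -cats1 sf_head_cat ?sz_s.
Qed.

Lemma nk_nwords d k : nk d k = nwords d (k + 4).
Proof.
rewrite /nk card_iter_line.
under eq_bigr => v _ do rewrite walks_SF.
transitivity (\sum_(s : 4.-tuple 'I_d.+1) sf_ext k s); first exact: (sum_SF_vert k predT).
rewrite nwordsE addnC /sf_count.
rewrite (big_tuple_cat _ 4 k (fun t => nat_of_bool (sf_word t && predT t))).
by apply: eq_bigr => s _; apply: eq_bigr => t _; rewrite andbT.
Qed.

Import GRing.Theory Num.Theory.
Local Open Scope ring_scope.

Theorem mainTheorem11 (d : nat) (hd : (2 <= d)%N) :
  (forall k : nat, nk d k = nwords d (k + 4)) /\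
  (nk d 0)%:Z = (d%:Z) ^+ 4 + (d%:Z) ^+ 3 - (d%:Z) ^+ 2 - d%:Z /\
  (nk d 1)%:Z = (d%:Z) ^+ 5 + (d%:Z) ^+ 4 - 2 * (d%:Z) ^+ 3 - (d%:Z) ^+ 2 + d%:Z /\
  (forall k : nat, (2 <= k)%N ->
     (nk d k)%:Z = (d%:Z - 1) * (nk d k.-1)%:Z + (d%:Z - 1) * (nk d k.-2)%:Z).
Proof.
have d_pred : (d.-1)%:Z = d%:Z - 1 by rewrite predn_int // (leq_trans _ hd).
have nwords_recZ m : (2 <= m)%N -> (nwords d m.+2)%:Z =
    (d%:Z - 1) * (nwords d m.+1)%:Z + (d%:Z - 1) * (nwords d m)%:Z.
  by move=> m2; rewrite nwords_rec // PoszD !PoszM d_pred.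
have nwords2Z : (nwords d 2)%:Z = d%:Z * (d%:Z + 1).
  by rewrite nwords2 PoszM intS addrC.
have nwords3Z : (nwords d 3)%:Z = d%:Z * (d%:Z * (d%:Z + 1)).
  by rewrite nwords3 !PoszM intS addrC.
split; first exact: nk_nwords.
split; first by rewrite nk_nwords (nwords_recZ 2) // nwords3Z nwords2Z; ring.
split.
  by rewrite nk_nwords (nwords_recZ 3) // (nwords_recZ 2) // nwords3Z nwords2Z; ring.
by case=> [|[|k]] // _; rewrite !nk_nwords !addn4 nwords_recZ.
Qed.
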